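(* Let $\mu\in\mathbb{R}$ and $\sigma>0$, and let $\mathcal{L}(\mu,\sigma)$ be the set of probability distributions $F$ on $\mathbb{R}$ with $\mathbb{E}^F[X]=\mu$ and $\mathbb{E}^F[X^2]=\mu^2+\sigma^2$. For any $F\in\mathcal{L}(\mu,\sigma)$ there exists a two-point distribution $F^*\in\mathcal{L}(\mu,\sigma)$ whose support is contained in $[\mathrm{ess\mbox{-}inf}\,F,\ \mathrm{ess\mbox{-}sup}\,F]$. Moreover, if $F$ is symmetric, then such a two-point distribution $F^*$ can be chosen to be symmetric.
   Context: A two-point distribution is the law of a random variable $X$ with $\mathbb{P}(X=x_1)=p_1$, $\mathbb{P}(X=x_2)=p_2$, where $0\le p_i<1$ and $p_1+p_2=1$. $\mathrm{ess\mbox{-}inf}\,F$ and $\mathrm{ess\mbox{-}sup}\,F$ are the essential infimum and supremum of a random variable with distribution $F$ (possibly $\mp\infty$). A distribution of $X$ is symmetric if there is $a\in\mathbb{R}$ with $\mathbb{P}(X-a>x)=\mathbb{P}(X-a<-x)$ for all $x\in\mathbb{R}$. *)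

From HB Require Import structures.
From mathcomp Require Import all_boot all_order all_algebra.
From mathcomp Require Import all_classical all_reals all_analysis.
From mathcomp Require Import ess_sup_inf.
Set Implicit Arguments. Unset Strict Implicit. Unset Printing Implicit Defensive.
Import Order.TTheory GRing.Theory Num.Theory.
Import numFieldNormedType.Exports.
Local Open Scope classical_set_scope.
Local Open Scope ring_scope.

Definition in_L {R : realType} (m s : R) (F : probability R R) : Prop :=
  F.-integrable setT (fun x : R => x%:E) /\
  F.-integrable setT (fun x : R => (x ^+ 2)%:E) /\
  (\int[F]_x (x%:E) = m%:E)%E /\
  (\int[F]_x ((x ^+ 2)%:E) = (m ^+ 2 + s ^+ 2)%:E)%E.

Definition two_point_in {R : realType} (S : set R) (F : probability R R) : Prop :=
  exists x1 x2 p1 p2 : R,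
    [/\ 0 <= p1 < 1, 0 <= p2 < 1, p1 + p2 = 1, x1 \in S /\ x2 \in S &
      forall A : set R, measurable A ->
        F A = (p1%:E * \d_x1 A + p2%:E * \d_x2 A)%E].

Definition symmetric_distr {R : realType} (F : probability R R) : Prop :=
  exists a : R, forall x : R,
    F [set y : R | y - a > x] = F [set y : R | y - a < - x].

Definition ess_inf_distr {R : realType} (F : probability R R) : \bar R :=
  ess_inf F (fun x : R => x%:E).
Definition ess_sup_distr {R : realType} (F : probability R R) : \bar R :=
  ess_sup F (fun x : R => x%:E).

Definition ess_range {R : realType} (F : probability R R) : set R :=
  [set x : R | (ess_inf_distr F <= x%:E)%E /\ (x%:E <= ess_sup_distr F)%E].

(* Integrating the quadratic (u - X)(X - l) >= 0 against F shows
   s^2 <= (u - m)(m - l) whenever F lives on [l, u], and integrating a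
   nonnegative affine function shows m lies strictly inside the essential
   range (equality would force X to be a.s. constant, contradicting s > 0).
   Hence some d > 0 fits both m + d and m - s^2/d into the essential range,
   and the two-point law on these points with weights s^2/(d^2+s^2) and
   d^2/(d^2+s^2) has mean m and variance s^2.  If F is symmetric about a,
   its ccdf tails coincide, so a = m and the essential range is symmetric
   about m; the bound then reads s <= u - m, so the symmetric law on m - s
   and m + s does the job. *)
From HB Require Import structures.
From mathcomp Require Import all_boot all_order all_algebra.
From mathcomp Require Import all_classical all_reals all_analysis.
From mathcomp Require Import ess_sup_inf measurable_realfun ring lra.
Import Order.TTheory GRing.Theory Num.Theory.
Import numFieldNormedType.Exports.
Local Open Scope classical_set_scope.
Local Open Scope ring_scope.

Section two_point_measure.
Context {d} {T : measurableType d} {R : realType} (x1 x2 : T) {p : R}.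
Hypotheses (p_ge0 : 0 <= p) (p_le1 : p <= 1).

Let onem_p_ge0 : 0 <= 1 - p. Proof. by rewrite subr_ge0. Qed.

Definition two_point (A : set T) : \bar R :=
  measure_add (mscale (NngNum p_ge0) (@dirac _ T x1 R))
              (mscale (NngNum onem_p_ge0) (@dirac _ T x2 R)) A.

Let two_point0 : two_point set0 = 0%E. Proof. exact: measure0. Qed.
Let two_point_ge0 A : (0 <= two_point A)%E. Proof. exact: measure_ge0. Qed.
Let two_point_sigma_additive : semi_sigma_additive two_point.
Proof. exact: measure_semi_sigma_additive. Qed.

HB.instance Definition _ := isMeasure.Build _ _ _ two_point
  two_point0 two_point_ge0 two_point_sigma_additive.

Lemma two_pointE A :
  two_point A = (p%:E * \d_x1 A + (1 - p)%:E * \d_x2 A)%E.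
Proof. exact: measure_addE. Qed.

Let two_pointT : two_point setT = 1%E.
Proof. by rewrite two_pointE !diracT !mule1 -EFinD subrKC. Qed.

HB.instance Definition _ := Measure_isProbability.Build _ _ _ two_point two_pointT.

Lemma ge0_integral_two_point (g : T -> \bar R) : measurable_fun setT g ->
  (forall x, 0 <= g x)%E ->
  (\int[two_point]_x g x = p%:E * g x1 + (1 - p)%:E * g x2)%E.
Proof.
move=> mg g0; rewrite ge0_integral_measure_add //.
by rewrite !ge0_integral_mscale //= !integral_dirac //= !diracT !mul1e.
Qed.

Lemma integrable_two_point (h : T -> R) : measurable_fun setT h ->
  two_point.-integrable setT (EFin \o h).
Proof.
move=> mh; apply/integrableP; split; first exact/measurable_EFinP.
rewrite ge0_integral_two_point //; last exact/measurableT_comp/measurable_EFinP.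
by rewrite /= -!EFinM -EFinD ltry.
Qed.

Lemma integral_two_point (h : T -> R) : measurable_fun setT h ->
  (\int[two_point]_x (h x)%:E = (p * h x1 + (1 - p) * h x2)%:E)%E.
Proof.
move=> mh; have mEh : measurable_fun setT (EFin \o h) by exact/measurable_EFinP.
rewrite integralE !ge0_integral_two_point //; last 2 first.
- exact: measurable_funeneg.
- exact: measurable_funepos.
rewrite !funeposE !funenegE /= -!EFin_max -!EFinM -!EFinD; congr EFin.
have maxB (r : R) : Num.max r 0 - Num.max (- r) 0 = r.
  by case: (leP r 0) => r0; [rewrite (max_l _) ?oppr_ge0 // sub0r opprK
                             |rewrite (max_r _) ?subr0 // oppr_le0 ltW].
by rewrite opprD addrACA -!mulrBr !maxB.
Qed.

End two_point_measure.

Section two_point_distribution.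
Context {R : realType}.

Lemma two_point_in_L (m s x1 x2 p : R) (p_ge0 : 0 <= p) (p_le1 : p <= 1) :
  p * x1 + (1 - p) * x2 = m ->
  p * x1 ^+ 2 + (1 - p) * x2 ^+ 2 = m ^+ 2 + s ^+ 2 ->
  in_L m s (two_point x1 x2 p_ge0 p_le1).
Proof.
move=> mean2 moment2.
have mX2 : measurable_fun setT (fun x : R => x ^+ 2) by exact: exprn_measurable.
split; first exact: integrable_two_point.
split; first exact: integrable_two_point.
by rewrite !integral_two_point // mean2 moment2.
Qed.

Lemma two_point_inP (S : set R) (x1 x2 p : R) (p_ge0 : 0 <= p) (p_le1 : p <= 1) :
  0 < p < 1 -> x1 \in S -> x2 \in S -> two_point_in S (two_point x1 x2 p_ge0 p_le1).
Proof.
case/andP=> p_gt0 p_lt1 Sx1 Sx2.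
exists x1, x2, p, (1 - p); split => //; first by rewrite p_ge0.
- by rewrite subr_ge0 p_le1 ltrBlDr ltrDl.
- by rewrite subrKC.
- by move=> A _; exact: two_pointE.
Qed.

Definition symmetric_about (P : probability R R) (a : R) :=
  forall t, P [set y | y - a > t] = P [set y | y - a < - t].

Lemma symmetric_about_two_point (a t : R) (p_ge0 : 0 <= 2^-1 :> R)
    (p_le1 : 2^-1 <= 1 :> R) :
  symmetric_about (two_point (a - t) (a + t) p_ge0 p_le1) a.
Proof.
move=> x /=; rewrite !two_pointE !diracE.
have in_predE (P : R -> bool) z : (z \in [set y | P y]) = P z.
  by apply/idP/idP => [/set_mem //|?]; exact: mem_set.
have -> : (1 - 2^-1 : R) = 2^-1 by rewrite [X in X - _](splitr 1) mul1r addrK.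
rewrite !in_predE (addrC a t) addrK addrAC subrr add0r.
by rewrite ltrN2 (ltrNr x) addeC.
Qed.

End two_point_distribution.

Lemma spread_in_range {R : realType} {L U : \bar R} {m s : R} :
  0 < s -> (L < m%:E)%E -> (m%:E < U)%E ->
  (forall l u, L = l%:E -> U = u%:E -> s ^+ 2 <= (u - m) * (m - l)) ->
  exists2 d, 0 < d & (L <= (m - s ^+ 2 / d)%:E)%E /\ ((m + d)%:E <= U)%E.
Proof.
move=> s_gt0 Lm mU LU; have s2_gt0 : 0 < s ^+ 2 by rewrite exprn_gt0.
case: U mU LU => [u | | ] mU LU; last by rewrite ltNge leNye in mU.
- rewrite lte_fin in mU; exists (u - m); first by rewrite subr_gt0.
  split; last by rewrite addrC subrK.
  case: L Lm LU => [l | | ] Lm LU; last exact: leNye.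
  + have := LU _ _ erefl erefl; rewrite mulrC -ler_pdivrMr ?subr_gt0 //.
    by rewrite lee_fin => ?; lra.
  + by rewrite ltNge leey in Lm.
- case: L Lm LU => [l | | ] Lm LU; last by exists 1 => //; rewrite leNye leey.
  + rewrite lte_fin in Lm; exists (s ^+ 2 / (m - l)).
      by rewrite divr_gt0 ?subr_gt0.
    split; last exact: leey.
    rewrite invf_div mulrC divfK ?gt_eqF // opprB addrC subrK.
    by rewrite lee_fin.
  + by rewrite ltNge leey in Lm.
Qed.

Lemma ae_measure0P {d} {T : measurableType d} {R : realType}
    (mu : {measure set T -> \bar R}) (A : set T) :
  measurable A -> {ae mu, forall x, ~ A x} <-> mu A = 0%E.
Proof.
move=> mA; rewrite -(negligibleP _ mA) -[X in _ <-> _.-negligible X]setCK.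
exact: iff_refl.
Qed.

Section essential_range.
Context {R : realType} (P : probability R R).

Let ae_proper : ProperFilter (almost_everywhere P).
Proof.
apply: ae_properfilter_algebraOfSetsType.
by have -> : (P : {measure set R -> \bar R}) setT = 1%E
  by exact: probability_setT.
Qed.

Lemma ess_sup_distr_neqNy : ess_sup_distr P != -oo%E.
Proof.
apply/eqP => supNy.
have [x] := @filter_ex _ _ ae_proper _ (ess_sup_ge P (fun x : R => x%:E)).
by rewrite [X in (_ <= X)%E]supNy leeNy_eq.
Qed.

Lemma ess_inf_distr_neqy : ess_inf_distr P != +oo%E.
Proof.
apply/eqP => infy.
have [x] := @filter_ex _ _ ae_proper _ (ess_inf_le P (fun x : R => x%:E)).
by rewrite [X in (X <= _)%E]infy leye_eq.
Qed.

Lemma ae_le_ess_sup_distr {u} : ess_sup_distr P = u%:E -> {ae P, forall x, x <= u}.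
Proof.
move=> supu; have : {ae P, forall x, (x%:E <= ess_sup_distr P)%E} := ess_sup_ge P _.
by apply: filterS => x; rewrite supu lee_fin.
Qed.

Lemma ae_ge_ess_inf_distr {l} : ess_inf_distr P = l%:E -> {ae P, forall x, l <= x}.
Proof.
move=> infl; have : {ae P, forall x, (ess_inf_distr P <= x%:E)%E} := ess_inf_le P _.
by apply: filterS => x; rewrite infl lee_fin.
Qed.

End essential_range.

Lemma measurable_subr_gt {R : realType} (a t : R) : measurable [set y : R | t < y - a].
Proof.
have -> : [set y : R | t < y - a] = `]t + a, +oo[%classic.
  by apply/seteqP; split => y /=; rewrite in_itv /= andbT ltrBrDr.
exact: measurable_itv.
Qed.

Lemma measurable_subr_lt {R : realType} (a t : R) : measurable [set y : R | y - a < t].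
Proof.
have -> : [set y : R | y - a < t] = `]-oo, t + a[%classic.
  by apply/seteqP; split => y /=; rewrite in_itv /= ltrBlDr.
exact: measurable_itv.
Qed.

Lemma symmetric_about_aeP {R : realType} {P : probability R R} {a} (t : R) :
  symmetric_about P a ->
  {ae P, forall y, y - a <= t} <-> {ae P, forall y, - t <= y - a}.
Proof.
move=> Pa.
have aeP (A : set R) (Q : R -> bool) : measurable A ->
    (forall y, Q y <-> ~ A y) -> {ae P, forall y, Q y} <-> P A = 0%E.
  move=> mA QA; apply: (iff_trans _ (ae_measure0P P _ mA)).
  by split; apply: filterS => y /QA.
have leNgtP (x y : R) : x <= y <-> ~ (y < x) by rewrite leNgt; split => /negP.
apply: iff_trans (aeP _ (fun y => y - a <= t) (measurable_subr_gt a t) _) _ => [y|].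
  exact: leNgtP.
rewrite Pa; apply: iff_sym; apply: (aeP _ (fun y => - t <= y - a)) => [|y].
  exact: measurable_subr_lt.
exact: leNgtP.
Qed.

Section centered_variables.
Context {R : realType}.

Definition centered (a y : R) := y - a.
Definition reflected (a y : R) := a - y.

Lemma measurable_centered a : measurable_fun setT (centered a).
Proof. by apply: measurable_funB => //; exact: measurable_cst. Qed.
Lemma measurable_reflected a : measurable_fun setT (reflected a).
Proof. by apply: measurable_funB => //; exact: measurable_cst. Qed.

HB.instance Definition _ a :=
  isMeasurableFun.Build _ _ R R (centered a) (measurable_centered a).
HB.instance Definition _ a :=
  isMeasurableFun.Build _ _ R R (reflected a) (measurable_reflected a).

End centered_variables.

Lemma expectation_eq_of_ccdf {d} {T : measurableType d} {R : realType}
    {P : probability T R} {X Y : {RV P >-> R}} :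
  (X : T -> R) \in Lfun P 1 -> (Y : T -> R) \in Lfun P 1 ->
  ccdf X =1 ccdf Y -> ('E_P[X] = 'E_P[Y])%E.
Proof.
move=> LX LY XY; rewrite !expectation_cdf_ccdf //; congr (_ - _)%E.
  by apply: eq_integral => r _; exact: XY.
by apply: eq_integral => r _; rewrite !cdf_1_ccdf XY.
Qed.

Definition quadratic {R : realType} (a b c x : R) := a * x ^+ 2 + b * x + c.

Section second_moments.
Context {R : realType} (m s : R) (F : probability R R).
Hypotheses (s_gt0 : 0 < s) (F_in_L : in_L m s F).
Implicit Types a b c l u : R.

Let integrable_id : F.-integrable setT (fun x : R => x%:E).
Proof. by case: F_in_L. Qed.
Let integrable_sqr : F.-integrable setT (fun x : R => (x ^+ 2)%:E).
Proof. by case: F_in_L => _ []. Qed.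
Let integral_id : (\int[F]_x x%:E = m%:E)%E.
Proof. by case: F_in_L => _ [_ []]. Qed.
Let integral_sqr : (\int[F]_x (x ^+ 2)%:E = (m ^+ 2 + s ^+ 2)%:E)%E.
Proof. by case: F_in_L => _ [_ []]. Qed.

Let quadraticE a b c : (fun x => (quadratic a b c x)%:E) =
  ((fun x => a%:E * (x ^+ 2)%:E) \+ (fun x => b%:E * x%:E) \+ cst c%:E)%E.
Proof. by apply/funext => x; rewrite /quadratic /= -!EFinM -!EFinD. Qed.

Lemma integrable_quadratic a b c :
  F.-integrable setT (fun x => (quadratic a b c x)%:E).
Proof.
rewrite quadraticE; apply: integrableD => //; last first.
  exact: finite_measure_integrable_cst.
by apply: integrableD => //; exact: integrableZl.
Qed.

Lemma integral_quadratic a b c : (\int[F]_x (quadratic a b c x)%:E =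
  (a * (m ^+ 2 + s ^+ 2) + b * m + c)%:E)%E.
Proof.
rewrite quadraticE integralD //; last 2 first.
- by apply: integrableD => //; exact: integrableZl.
- exact: finite_measure_integrable_cst.
rewrite integralD //; [|exact: integrableZl|exact: integrableZl].
have int_cst : (\int[F]_x (cst c%:E) x = c%:E)%E.
  rewrite integral_cst // -[RHS]mule1; congr (_ * _)%E; exact: probability_setT.
by rewrite !integralZl // integral_id integral_sqr int_cst -!EFinM -!EFinD.
Qed.

Let measurable_quadratic a b c :
  measurable_fun setT (fun x => (quadratic a b c x)%:E).
Proof. exact: measurable_int (integrable_quadratic a b c). Qed.

Lemma quadratic_moment_ge0 {a b c} : {ae F, forall x, 0 <= quadratic a b c x} ->
  0 <= a * (m ^+ 2 + s ^+ 2) + b * m + c.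
Proof.
move=> q_ge0; rewrite -lee_fin -integral_quadratic.
rewrite (ae_eq_integral (fun x => (quadratic a b c x)%:E)^\+)%E //.
- by apply: integral_ge0 => x _; exact: funepos_ge0.
- exact: measurable_funepos.
- by apply: filterS q_ge0 => x qx _; rewrite funeposE max_l // lee_fin.
Qed.

Lemma ae_quadratic_eq0 {a b c} : {ae F, forall x, 0 <= quadratic a b c x} ->
  a * (m ^+ 2 + s ^+ 2) + b * m + c = 0 -> {ae F, forall x, quadratic a b c x = 0}.
Proof.
move=> q_ge0 moment0.
have : (\int[F]_x `|(quadratic a b c x)%:E| = 0)%E.
  rewrite (ae_eq_integral (fun x => (quadratic a b c x)%:E)) //.
  - by rewrite integral_quadratic moment0.
  - exact/measurableT_comp.
  - by apply: filterS q_ge0 => x qx _; rewrite gee0_abs // lee_fin.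
move/(ae_eq_integral_abs _ measurableT (measurable_quadratic a b c)).
by apply: filterS => x /(_ I) [].
Qed.

Lemma affine_mean_gt0 b c : b != 0 -> {ae F, forall x, 0 <= b * x + c} ->
  0 < b * m + c.
Proof.
move=> b_neq0 bc_ge0.
have q_ge0 : {ae F, forall x, 0 <= quadratic 0 b c x}.
  by apply: filterS bc_ge0 => x; rewrite /quadratic mul0r add0r.
have := quadratic_moment_ge0 q_ge0; rewrite mul0r add0r le_eqVlt.
case/orP => [/eqP bc0|//]; exfalso.
have sq_ge0 : {ae F, forall x, 0 <= quadratic (- b ^+ 2) (- (2 * b * c)) (- c ^+ 2) x}.
  apply: filterS (ae_quadratic_eq0 q_ge0 _) => [x|]; last by rewrite mul0r add0r.
  rewrite /quadratic mul0r add0r => bxc0.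
  have -> : - b ^+ 2 * x ^+ 2 + - (2 * b * c) * x + - c ^+ 2 = - (b * x + c) ^+ 2.
    by ring.
  by rewrite bxc0 expr0n oppr0.
have := quadratic_moment_ge0 sq_ge0.
have -> : - b ^+ 2 * (m ^+ 2 + s ^+ 2) + - (2 * b * c) * m + - c ^+ 2 =
          - (b * m + c) ^+ 2 - b ^+ 2 * s ^+ 2 by ring.
have b2_gt0 : 0 < b ^+ 2 by rewrite lt_def sqrf_eq0 b_neq0 sqr_ge0.
have bs_gt0 : 0 < b ^+ 2 * s ^+ 2 by apply: mulr_gt0 => //; rewrite exprn_gt0.
by rewrite -bc0 expr0n oppr0 sub0r oppr_ge0 leNgt bs_gt0.
Qed.

Lemma mean_lt_of_ae_le {u} : {ae F, forall x, x <= u} -> m < u.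
Proof.
move=> le_u; rewrite -subr_gt0 -mulN1r addrC.
apply: affine_mean_gt0; first by rewrite oppr_eq0 oner_eq0.
by apply: filterS le_u => x; rewrite mulN1r addrC subr_ge0.
Qed.

Lemma lt_mean_of_ae_ge {l} : {ae F, forall x, l <= x} -> l < m.
Proof.
move=> ge_l; rewrite -subr_gt0 -[m]mul1r.
apply: affine_mean_gt0; first exact: oner_neq0.
by apply: filterS ge_l => x; rewrite mul1r subr_ge0.
Qed.

Lemma variance_le_of_ae_bounds {l u} :
  {ae F, forall x, l <= x} -> {ae F, forall x, x <= u} ->
  s ^+ 2 <= (u - m) * (m - l).
Proof.
move=> ge_l le_u.
have q_ge0 : {ae F, forall x, 0 <= quadratic (-1) (u + l) (- (u * l)) x}.
  apply: filterS2 ge_l le_u => x lx xu.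
  have -> : quadratic (-1) (u + l) (- (u * l)) x = (u - x) * (x - l).
    by rewrite /quadratic; ring.
  by rewrite mulr_ge0 // subr_ge0.
have := quadratic_moment_ge0 q_ge0.
have -> : -1 * (m ^+ 2 + s ^+ 2) + (u + l) * m + - (u * l) =
          (u - m) * (m - l) - s ^+ 2 by ring.
by rewrite subr_ge0.
Qed.

Lemma mean_lt_ess_sup : (m%:E < ess_sup_distr F)%E.
Proof.
case E: (ess_sup_distr F) => [u| |].
- by rewrite lte_fin; exact/mean_lt_of_ae_le/ae_le_ess_sup_distr.
- exact: ltry.
- by have := ess_sup_distr_neqNy F; rewrite E.
Qed.

Lemma ess_inf_lt_mean : (ess_inf_distr F < m%:E)%E.
Proof.
case E: (ess_inf_distr F) => [l| |].
- by rewrite lte_fin; exact/lt_mean_of_ae_ge/ae_ge_ess_inf_distr.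
- by have := ess_inf_distr_neqy F; rewrite E.
- exact: ltNyr.
Qed.

Lemma variance_le_ess_range l u :
  ess_inf_distr F = l%:E -> ess_sup_distr F = u%:E -> s ^+ 2 <= (u - m) * (m - l).
Proof.
move=> /ae_ge_ess_inf_distr ge_l /ae_le_ess_sup_distr le_u.
exact: variance_le_of_ae_bounds.
Qed.

Lemma exists_two_point_in_L :
  exists Fs : probability R R, in_L m s Fs /\ two_point_in (ess_range F) Fs.
Proof.
have [d d_gt0 [dL dU]] := spread_in_range s_gt0 ess_inf_lt_mean mean_lt_ess_sup
  variance_le_ess_range.
set D := d ^+ 2 + s ^+ 2.
have D_gt0 : 0 < D by rewrite addr_gt0 ?exprn_gt0.
have p_gt0 : 0 < d ^+ 2 / D by rewrite divr_gt0 ?exprn_gt0.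
have p_lt1 : d ^+ 2 / D < 1 by rewrite ltr_pdivrMr // mul1r ltrDl exprn_gt0.
exists (two_point (m - s ^+ 2 / d) (m + d) (ltW p_gt0) (ltW p_lt1)); split.
  have d_neq0 : d != 0 by rewrite gt_eqF.
  have D_neq0 : d ^+ 2 + s ^+ 2 != 0 by rewrite gt_eqF.
  by apply: two_point_in_L; rewrite /D; field; rewrite D_neq0 d_neq0.
apply: two_point_inP; first by rewrite p_gt0 p_lt1.
  apply/mem_set; split => //; apply: le_trans (ltW mean_lt_ess_sup).
  by rewrite lee_fin lerBlDr lerDl divr_ge0 // ltW // exprn_gt0.
apply/mem_set; split => //; apply: le_trans (ltW ess_inf_lt_mean) _.
by rewrite lee_fin lerDl ltW.
Qed.

Lemma symmetric_about_mean {a} : symmetric_about F a -> a = m.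
Proof.
move=> Fa.
have centeredE :
    (fun x => (centered a x)%:E) = (fun x => (quadratic 0 1 (- a) x)%:E).
  by apply/funext => x; rewrite /quadratic /centered mul0r add0r mul1r.
have reflectedE :
    (fun x => (reflected a x)%:E) = (fun x => (quadratic 0 (-1) a x)%:E).
  by apply/funext => x; rewrite /quadratic /reflected mul0r add0r mulN1r addrC.
have L1_centered : centered a \in Lfun F 1.
  apply/Lfun1_integrable.
  by have := integrable_quadratic 0 1 (- a); rewrite -centeredE.
have L1_reflected : reflected a \in Lfun F 1.
  apply/Lfun1_integrable.
  by have := integrable_quadratic 0 (-1) a; rewrite -reflectedE.
have ccdfE r : ccdf (P:=F) (centered a) r = ccdf (P:=F) (reflected a) r.
  rewrite /ccdf /distribution /pushforward.
  have -> : centered a @^-1` `]r, +oo[ = [set y | y - a > r].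
    by apply/seteqP; split => y; rewrite /= in_itv /= andbT.
  have -> : reflected a @^-1` `]r, +oo[ = [set y | y - a < - r].
    by apply/seteqP; split => y; rewrite /= in_itv /= andbT ltrNr opprB.
  exact: Fa.
have := expectation_eq_of_ccdf L1_centered L1_reflected ccdfE.
rewrite !expectation_def centeredE reflectedE !integral_quadratic => -[].
by rewrite !mul0r !add0r mul1r mulN1r => ?; lra.
Qed.

Lemma sd_le_of_ae_dev {t} : {ae F, forall x, - t <= x - m} ->
  {ae F, forall x, x - m <= t} -> s <= t.
Proof.
move=> ge_t le_t; have t_gt0 : 0 < t.
  rewrite -(ltrD2l m) addr0; apply: mean_lt_of_ae_le.
  by apply: filterS le_t => x ?; lra.
have : s ^+ 2 <= t ^+ 2.
  have -> : t ^+ 2 = (m + t - m) * (m - (m - t)) by ring.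
  apply: variance_le_of_ae_bounds.
    by apply: filterS ge_t => x ?; lra.
  by apply: filterS le_t => x ?; lra.
by move=> st; rewrite -ler_sqr // nnegrE ltW.
Qed.

Lemma symmetric_about_ess_range {a} : symmetric_about F a ->
  (ess_inf_distr F <= (m - s)%:E)%E /\ ((m + s)%:E <= ess_sup_distr F)%E.
Proof.
move=> Fa; have am := symmetric_about_mean Fa; subst a.
have sd_le t : {ae F, forall x, x - m <= t} -> s <= t.
  by move=> le_t; apply: (sd_le_of_ae_dev _ le_t); exact/(symmetric_about_aeP t Fa).
split.
- case E: (ess_inf_distr F) => [l| |].
  + rewrite lee_fin lerBrDl -lerBrDr; apply: sd_le.
    apply/(symmetric_about_aeP _ Fa).
    by apply: filterS (ae_ge_ess_inf_distr _ E) => x; rewrite opprB lerD2r.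
  + by have := ess_inf_distr_neqy F; rewrite E.
  + exact: leNye.
- case E: (ess_sup_distr F) => [u| |].
  + rewrite lee_fin -lerBrDl; apply: sd_le.
    by apply: filterS (ae_le_ess_sup_distr _ E) => x; rewrite lerD2r.
  + exact: leey.
  + by have := ess_sup_distr_neqNy F; rewrite E.
Qed.

Lemma exists_symmetric_two_point_in_L : symmetric_distr F ->
  exists Fs : probability R R,
    [/\ in_L m s Fs, two_point_in (ess_range F) Fs & symmetric_distr Fs].
Proof.
have ms_le : m - s <= m + s by rewrite lerD2l -subr_ge0 opprK addr_ge0 // ltW.
case=> a /symmetric_about_ess_range [Ls sU].
have half_ge0 : 0 <= 2^-1 :> R by rewrite invr_ge0.
have half_le1 : 2^-1 <= 1 :> R by rewrite invf_le1 // ler1n.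
exists (two_point (m - s) (m + s) half_ge0 half_le1); split.
- by apply: two_point_in_L; field.
- apply: two_point_inP; first by rewrite invr_gt0 ltr0n invf_lt1 // ltr1n.
    by apply/mem_set; split => //; apply: le_trans _ sU; rewrite lee_fin.
  by apply/mem_set; split => //; apply: le_trans Ls _; rewrite lee_fin.
- by exists m; exact: symmetric_about_two_point.
Qed.

End second_moments.

Theorem lemma1 (R : realType) (m s : R) (hs : 0 < s) (F : probability R R) :
  in_L m s F ->
  (exists Fs : probability R R, in_L m s Fs /\ two_point_in (ess_range F) Fs) /\
  (symmetric_distr F ->
   exists Fs : probability R R,
     [/\ in_L m s Fs, two_point_in (ess_range F) Fs & symmetric_distr Fs]).
Proof.
move=> F_in_L; split; first exact: exists_two_point_in_L.
exact: exists_symmetric_two_point_in_L.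
Qed.
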